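(* Consider the multiset combinatorial auction model described in the context, where the auction's allocation is a solution of the winner determination problem (WDP) on the inferred values. (i) In an auction using only demand queries, adding demand queries can reduce efficiency: a single additional demand query can cause an efficiency drop arbitrarily close to $100\%$, i.e., for every $\delta>0$ there exist an instance, a finite set of demand-query price vectors with truthful responses for which the WDP allocation has efficiency $1$, and one additional price vector such that, after adding the (truthful) responses to that demand query, the WDP allocation has efficiency less than $\delta$. (ii) By comparison, in an auction using only value queries and assuming truthful bidding, adding additional value queries can never reduce the efficiency of the WDP allocation.
   Context: Multiset combinatorial auction: bidders $N=\{1,\dots,n\}$, items $M=\{1,\dots,m\}$ with capacities $c\in\mathbb{N}^m$. Bundles are $x\in\mathcal{X}=\{0,\dots,c_1\}\times\cdots\times\{0,\dots,c_m\}$. Each bidder $i$ has a value function $v_i:\mathcal{X}\to\mathbb{R}_{\ge0}$. Feasible allocations: $\mathcal{F}=\{a\in\mathcal{X}^n:\sum_i a_{ij}\le c_j\ \forall j\}$. Social welfare $V(a)=\sum_i v_i(a_i)$; efficiency of $a$ is $V(a)/\max_{a'\in\mathcal{F}}V(a')$. A demand query at prices $p\in\mathbb{R}^m_{\ge0}$ is answered truthfully by bidder $i$ with some $x_i^*(p)\in\arg\max_{x\in\mathcal{X}}\{v_i(x)-\langle p,x\rangle\}$; a value query for $x$ is answered with $v_i(x)$. With reports $R_i$ consisting of demand responses $R_i^{DQ}$ (pairs $(x,p)$) and value responses $R_i^{VQ}$ (pairs $(x,v_i(x))$), the inferred value is $\tilde v_i(x;R_i)=v_i(x)$ if $x$ appears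 in $R_i^{VQ}$ and otherwise $\max(\{\langle x,p\rangle:(x,p)\in R_i^{DQ}\}\cup\{0\})$. The WDP allocation is $a^*(R)\in\arg\max_{a\in\mathcal{F}}\sum_i\tilde v_i(a_i;R_i)$.
   Formalization: Each $v_i$ vanishes on the empty bundle, assumed in (ii) and imposed on the instance in (i); (i) concerns every WDP allocation, and in (ii) each WDP allocation after has efficiency at least that of some WDP allocation before. Apart from conventions, each condition added here is assumed in the paper as well or is needed for the statement above to hold. *)

From HB Require Import structures.
From mathcomp Require Import all_boot all_order all_algebra.
Set Implicit Arguments.
Unset Strict Implicit.
Unset Printing Implicit Defensive.
Import Order.TTheory GRing.Theory Num.Theory.
Local Open Scope ring_scope.

Section Auction.
Variable R : realFieldType.
Variable n m : nat.
Variable c : 'I_m -> nat.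

Definition bundle := {dffun forall j : 'I_m, 'I_(c j).+1}.

Definition empty_bundle : bundle := [ffun j => ord0].

(* Price vectors p in R^m (nonnegativity imposed where used). *)
Definition prices := {ffun 'I_m -> R}.

Definition pairing (x : bundle) (p : prices) : R :=
  \sum_(j < m) p j * (nat_of_ord (x j))%:R.

Definition is_demand (v : bundle -> R) (p : prices) (x : bundle) : Prop :=
  forall y : bundle, v y - pairing y p <= v x - pairing x p.

Definition allocation := {ffun 'I_n -> bundle}.

Definition feasible (a : allocation) : bool :=
  [forall j : 'I_m, (\sum_(i < n) nat_of_ord (a i j) <= c j)%N].

Definition welfare (v : 'I_n -> bundle -> R) (a : allocation) : R :=
  \sum_(i < n) v i (a i).

(* max_{a' in F} V(a')  (F is nonempty and values are >= 0). *)
Definition opt_welfare (v : 'I_n -> bundle -> R) : R :=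
  \big[Num.max/0]_(a : allocation | feasible a) welfare v a.

Definition efficiency (v : 'I_n -> bundle -> R) (a : allocation) : R :=
  welfare v a / opt_welfare v.

(* Inferred value ~v_i(x; R_i): reports consist of demand responses DQ
   (pairs (x,p)) and value-queried bundles VQ (truthfully answered with
   v_i(x)). *)
Definition inferred_value (v : bundle -> R) (DQ : seq (bundle * prices))
    (VQ : seq bundle) (x : bundle) : R :=
  if x \in VQ then v x
  else \big[Num.max/0]_(q <- DQ | q.1 == x) pairing x q.2.

Definition is_WDP (vt : 'I_n -> bundle -> R) (a : allocation) : Prop :=
  feasible a /\ forall a' : allocation, feasible a' -> welfare vt a' <= welfare vt a.

Definition dq_reports (resp : 'I_n -> prices -> bundle) (i : 'I_n)
    (ps : seq prices) : seq (bundle * prices) :=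
  [seq (resp i p, p) | p <- ps].

End Auction.

From HB Require Import structures.
From mathcomp Require Import all_boot all_order all_algebra.
From mathcomp Require Import lra.
Set Implicit Arguments.
Unset Strict Implicit.
Unset Printing Implicit Defensive.

Import Order.TTheory GRing.Theory Num.Theory.
Local Open Scope ring_scope.

(* (i) One bidder and two unit-capacity items A, B; she values AB at 1, A alone
   at eps and everything else at 0.  At prices (t, 0) with t < eps she demands AB,
   which only reveals the lower bound t on v(AB); at the extra prices (eps, 1) she
   demands A, revealing v(A) >= eps > t.  The WDP on inferred values thus switches
   from AB (efficiency 1) to A (efficiency eps).
   (ii) Value-query reports never overestimate.  A WDP allocation for the smaller
   set of queries may be assumed to hand out only queried bundles (others are
   replaced by the empty bundle); its true welfare is then its inferred welfare,
   which is at most its inferred welfare under the larger set of queries, hence at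
   most that of the WDP allocation a', hence at most the true welfare of a'. *)


Section Allocations.
Variables (R : realFieldType) (n m : nat) (c : 'I_m -> nat).
Implicit Types (v : 'I_n -> bundle c -> R) (a : allocation n c).

Lemma pairing_ge0 (x : bundle c) (p : prices R m) :
  (forall j, 0 <= p j) -> 0 <= pairing x p.
Proof. by move=> p_ge0; apply: sumr_ge0 => j _; rewrite mulr_ge0. Qed.

Lemma opt_welfare_ge0 v : 0 <= opt_welfare v.
Proof. exact: bigmax_ge_id. Qed.

Lemma ler_efficiency v a a' :
  welfare v a <= welfare v a' -> efficiency v a <= efficiency v a'.
Proof. by move=> le_aa'; rewrite ler_wpM2r // invr_ge0 opt_welfare_ge0. Qed.

Definition empty_allocation : allocation n c := [ffun => empty_bundle c].

Lemma feasible_empty_allocation : feasible empty_allocation.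
Proof. by apply/forallP => j; rewrite big1 // => i _; rewrite !ffunE. Qed.

Lemma exists_WDP v : exists a, is_WDP v a.
Proof.
case: (arg_maxP (welfare v) feasible_empty_allocation) => a feas_a opt_a.
by exists a; split.
Qed.

Lemma inferred_value_dq (w : bundle c -> R) (resp : 'I_n -> prices R m -> bundle c)
    i ps x :
  inferred_value w (dq_reports resp i ps) [::] x =
  \big[Num.max/0]_(p <- ps | resp i p == x) pairing x p.
Proof. by rewrite /inferred_value in_nil big_map. Qed.

Lemma inferred_value_vq (w : bundle c -> R) Q x :
  inferred_value w [::] Q x = if x \in Q then w x else 0.
Proof. by rewrite /inferred_value big_nil. Qed.

Lemma inferred_value_vq_le (w : bundle c -> R) Q x :
  0 <= w x -> inferred_value w [::] Q x <= w x.
Proof. by rewrite inferred_value_vq; case: ifP. Qed.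

Lemma inferred_value_vq_subset (w : bundle c -> R) Q Q' x :
  0 <= w x -> {subset Q <= Q'} ->
  inferred_value w [::] Q x <= inferred_value w [::] Q' x.
Proof.
move=> w_ge0 sub_QQ'; rewrite !inferred_value_vq.
by case: ifP => [/sub_QQ' -> //|_]; case: ifP.
Qed.

End Allocations.

Section ValueQueries.
Variables (R : realFieldType) (n m : nat) (c : 'I_m -> nat).
Variable v : 'I_n -> bundle c -> R.
Hypothesis v_ge0 : forall i x, 0 <= v i x.
Hypothesis v_empty : forall i, v i (empty_bundle c) = 0.
Implicit Types (Q : 'I_n -> seq (bundle c)) (a : allocation n c).

Local Notation vq_value Q := (fun i => inferred_value (v i) [::] (Q i)).

Definition restrict_to_queried Q a : allocation n c :=
  [ffun i => if a i \in Q i then a i else empty_bundle c].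

Lemma feasible_restrict_to_queried Q a :
  feasible a -> feasible (restrict_to_queried Q a).
Proof.
move=> /forallP feas_a; apply/forallP => j; apply: leq_trans (feas_a j).
by apply: leq_sum => i _; rewrite ffunE; case: ifP => // _; rewrite ffunE.
Qed.

Lemma vq_welfare_restrict_to_queried Q a :
  welfare (vq_value Q) (restrict_to_queried Q a) = welfare (vq_value Q) a.
Proof.
apply: eq_bigr => i _; rewrite ffunE !inferred_value_vq.
by case aQ: (a i \in Q i); rewrite /= ?aQ // v_empty if_same.
Qed.

Lemma welfare_restrict_to_queried Q a :
  welfare v (restrict_to_queried Q a) =
  welfare (vq_value Q) (restrict_to_queried Q a).
Proof.
apply: eq_bigr => i _; rewrite ffunE inferred_value_vq.
by case: ifP => [-> //|_]; rewrite v_empty if_same.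
Qed.

Lemma vq_WDP_monotone Q Q' a' :
  (forall i, {subset Q i <= Q' i}) -> is_WDP (vq_value Q') a' ->
  exists2 a, is_WDP (vq_value Q) a & welfare v a <= welfare v a'.
Proof.
move=> sub_QQ' [feas_a' opt_a'].
have [a0 [feas_a0 opt_a0]] := exists_WDP (vq_value Q).
have feas_a := feasible_restrict_to_queried Q feas_a0.
exists (restrict_to_queried Q a0).
  by split=> // b feas_b; rewrite vq_welfare_restrict_to_queried; apply: opt_a0.
rewrite welfare_restrict_to_queried.
apply: le_trans (le_trans _ (opt_a' _ feas_a)) _.
  by apply: ler_sum => i _; exact: inferred_value_vq_subset.
by apply: ler_sum => i _; exact: inferred_value_vq_le.
Qed.

End ValueQueries.

Section SingleBidder.
Variables (R : realFieldType) (m : nat) (c : 'I_m -> nat).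
Implicit Types (w : 'I_1 -> bundle c -> R) (a : allocation 1 c).

Definition single_allocation (x : bundle c) : allocation 1 c := [ffun => x].

Lemma feasible_single a : feasible a.
Proof. by apply/forallP => j; rewrite big_ord1 -ltnS ltn_ord. Qed.

Lemma welfare_single w a : welfare w a = w ord0 (a ord0).
Proof. exact: big_ord1. Qed.

Lemma is_WDP_single_max w a x :
  (forall y, y != x -> w ord0 y < w ord0 x) -> is_WDP w a -> a ord0 = x.
Proof.
move=> x_max [_ opt_a]; apply/eqP; apply: contraT => /x_max.
have := opt_a _ (feasible_single (single_allocation x)).
by rewrite !welfare_single ffunE => /le_lt_trans /[apply]; rewrite ltxx.
Qed.

Lemma opt_welfare_single w x :
  (forall y, w ord0 y <= w ord0 x) -> 0 <= w ord0 x -> opt_welfare w = w ord0 x.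
Proof.
move=> x_max x_ge0; apply/le_anti/andP; split.
  by apply: bigmax_le => // a _; rewrite welfare_single.
apply: (bigmax_sup (single_allocation x)); first exact: feasible_single.
by rewrite welfare_single ffunE.
Qed.

End SingleBidder.

Definition unit_capacity : 'I_2 -> nat := fun _ => 1%N.

Definition bundle_AB : bundle unit_capacity :=
  [ffun j => (@ord_max 1 : 'I_(unit_capacity j).+1)].

Definition bundle_A : bundle unit_capacity :=
  [ffun j => if j == ord0 then (@ord_max 1 : 'I_(unit_capacity j).+1) else ord0].

Lemma bundle_A_neq_AB : bundle_A != bundle_AB.
Proof. by apply/eqP => /ffunP /(_ ord_max); rewrite !ffunE. Qed.

Lemma empty_neq_AB : empty_bundle unit_capacity != bundle_AB.
Proof. by apply/eqP => /ffunP /(_ ord0); rewrite !ffunE. Qed.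

Lemma empty_neq_A : empty_bundle unit_capacity != bundle_A.
Proof. by apply/eqP => /ffunP /(_ ord0); rewrite !ffunE. Qed.

Definition price2 (R : realFieldType) (pA pB : R) : prices R 2 :=
  [ffun j => if j == ord0 then pA else pB].

Lemma pairing_price2 (R : realFieldType) (x : bundle unit_capacity) (pA pB : R) :
  pairing x (price2 pA pB) = pA * (x ord0)%:R + pB * (x ord_max)%:R.
Proof.
rewrite /pairing big_ord_recl big_ord1 !ffunE.
by have -> : lift ord0 ord0 = ord_max :> 'I_2 by apply: val_inj.
Qed.

Lemma pairing_AB (R : realFieldType) (pA pB : R) :
  pairing bundle_AB (price2 pA pB) = pA + pB.
Proof. by rewrite pairing_price2 !ffunE !mulr1. Qed.

Lemma pairing_A (R : realFieldType) (pA pB : R) : pairing bundle_A (price2 pA pB) = pA.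
Proof. by rewrite pairing_price2 !ffunE /= mulr1 mulr0 addr0. Qed.

Lemma price2_ge0 (R : realFieldType) (pA pB : R) :
  0 <= pA -> 0 <= pB -> forall j, 0 <= price2 pA pB j.
Proof. by move=> pA_ge0 pB_ge0 j; rewrite ffunE; case: ifP. Qed.

Section OneExtraDemandQuery.
Variables (R : realFieldType) (eps t : R).
Hypotheses (t_gt0 : 0 < t) (t_lt_eps : t < eps) (eps_le1 : eps <= 1).

Definition complements_value (i : 'I_1) (x : bundle unit_capacity) : R :=
  if x == bundle_AB then 1 else if x == bundle_A then eps else 0.

Definition first_prices : prices R 2 := price2 t 0.

Definition extra_prices : prices R 2 := price2 eps 1.

Definition truthful_response (i : 'I_1) (p : prices R 2) : bundle unit_capacity :=
  if p == extra_prices then bundle_A else bundle_AB.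

Let eps_gt0 : 0 < eps := lt_trans t_gt0 t_lt_eps.
Let t_le1 : t <= 1 := le_trans (ltW t_lt_eps) eps_le1.

Lemma complements_value_ge0 i x : 0 <= complements_value i x.
Proof.
by rewrite /complements_value; case: ifP => // _; case: ifP => // _; apply: ltW.
Qed.

Lemma complements_value_empty i :
  complements_value i (empty_bundle unit_capacity) = 0.
Proof. by rewrite /complements_value (negbTE empty_neq_AB) (negbTE empty_neq_A). Qed.

Lemma opt_welfare_complements : opt_welfare complements_value = 1.
Proof.
rewrite (@opt_welfare_single _ _ _ _ bundle_AB) /complements_value ?eqxx //.
by move=> y; case: ifP => // _; case: ifP.
Qed.

Lemma first_prices_ge0 j : 0 <= first_prices j.
Proof. exact: price2_ge0 (ltW t_gt0) (lexx 0) j. Qed.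

Lemma extra_prices_ge0 j : 0 <= extra_prices j.
Proof. exact: price2_ge0 (ltW eps_gt0) ler01 j. Qed.

Lemma first_neq_extra : first_prices != extra_prices.
Proof. by apply/eqP => /ffunP /(_ ord_max) /eqP; rewrite !ffunE eq_sym oner_eq0. Qed.

Lemma demand_first_prices i :
  is_demand (complements_value i) first_prices (truthful_response i first_prices).
Proof.
rewrite /truthful_response (negbTE first_neq_extra) => y.
rewrite /complements_value eqxx pairing_AB addr0.
have [->|_] := eqVneq y bundle_AB; first by rewrite pairing_AB addr0.
have [->|_] := eqVneq y bundle_A; first by rewrite pairing_A lerD2r.
rewrite sub0r (@le_trans _ _ 0) ?subr_ge0 // oppr_le0.
exact: pairing_ge0 first_prices_ge0.
Qed.

Lemma demand_extra_prices i :
  is_demand (complements_value i) extra_prices (truthful_response i extra_prices).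
Proof.
rewrite /truthful_response eqxx => y.
rewrite /complements_value (negbTE bundle_A_neq_AB) eqxx pairing_A subrr.
have [->|_] := eqVneq y bundle_AB.
  by rewrite pairing_AB opprD addrA addrAC subrr sub0r oppr_le0 ltW.
have [->|_] := eqVneq y bundle_A; first by rewrite pairing_A subrr.
by rewrite sub0r oppr_le0; apply: pairing_ge0 extra_prices_ge0.
Qed.

Lemma inferred_value_first i x :
  inferred_value (complements_value i)
    (dq_reports truthful_response i [:: first_prices]) [::] x
  = if x == bundle_AB then t else 0.
Proof.
rewrite inferred_value_dq big_cons big_nil /truthful_response.
rewrite (negbTE first_neq_extra) eq_sym.
by case: eqP => [->|//]; rewrite pairing_AB addr0 max_l // ltW.
Qed.

Lemma inferred_value_first_extra i x :
  inferred_value (complements_value i)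
    (dq_reports truthful_response i [:: first_prices; extra_prices]) [::] x
  = if x == bundle_AB then t else if x == bundle_A then eps else 0.
Proof.
rewrite inferred_value_dq !big_cons big_nil /truthful_response.
rewrite (negbTE first_neq_extra) eqxx ![_ == x]eq_sym.
have [->|_] := eqVneq x bundle_AB.
  by rewrite eq_sym (negbTE bundle_A_neq_AB) pairing_AB addr0 max_l // ltW.
by case: eqP => [->|//]; rewrite pairing_A max_l // ltW.
Qed.

Local Notation inferred_after ps :=
  (fun i => inferred_value (complements_value i)
              (dq_reports truthful_response i ps) [::]).

Lemma efficiency_first a :
  is_WDP (inferred_after [:: first_prices]) a -> efficiency complements_value a = 1.
Proof.
move=> WDP_a; rewrite /efficiency welfare_single opt_welfare_complements divr1.
rewrite (@is_WDP_single_max _ _ _ _ _ bundle_AB _ WDP_a) /complements_value ?eqxx //.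
by move=> y /negbTE y_neq_AB; rewrite !inferred_value_first y_neq_AB eqxx.
Qed.

Lemma efficiency_first_extra a :
  is_WDP (inferred_after [:: first_prices; extra_prices]) a ->
  efficiency complements_value a = eps.
Proof.
move=> WDP_a; rewrite /efficiency welfare_single opt_welfare_complements divr1.
rewrite (@is_WDP_single_max _ _ _ _ _ bundle_A _ WDP_a) /complements_value.
  by rewrite (negbTE bundle_A_neq_AB) eqxx.
move=> y /negbTE y_neq_A; rewrite !inferred_value_first_extra y_neq_A eqxx.
by rewrite (negbTE bundle_A_neq_AB); case: ifP.
Qed.

End OneExtraDemandQuery.

Theorem proposition3p3 :
  (* (i) demand queries: one extra query can drop efficiency from 1 to < delta *)
  (forall (R : realFieldType) (delta : R), 0 < delta ->
    exists (n m : nat) (c : 'I_m -> nat) (v : 'I_n -> bundle c -> R),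
      (forall i x, 0 <= v i x) /\ (forall i, v i (empty_bundle c) = 0) /\
      exists (ps : seq (prices R m)) (pnew : prices R m)
             (resp : 'I_n -> prices R m -> bundle c),
        (forall p, p \in pnew :: ps ->
           (forall j, 0 <= p j) /\ (forall i, is_demand (v i) p (resp i p))) /\
        (forall a, is_WDP (fun i => inferred_value (v i) (dq_reports resp i ps) [::]) a ->
           efficiency v a = 1) /\
        (forall a, is_WDP (fun i => inferred_value (v i)
                                       (dq_reports resp i (rcons ps pnew)) [::]) a ->
           efficiency v a < delta))
  /\
  (* (ii) value queries: adding (truthful) value queries never reduces efficiency *)
  (forall (R : realFieldType) (n m : nat) (c : 'I_m -> nat) (v : 'I_n -> bundle c -> R),
    (forall i x, 0 <= v i x) -> (forall i, v i (empty_bundle c) = 0) ->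
    forall Q Q' : 'I_n -> seq (bundle c),
      (forall i, {subset Q i <= Q' i}) ->
      forall a', is_WDP (fun i => inferred_value (v i) [::] (Q' i)) a' ->
      exists a, is_WDP (fun i => inferred_value (v i) [::] (Q i)) a /\
                efficiency v a <= efficiency v a').
Proof.
split.
  move=> R delta delta_gt0.
  pose eps := Num.min (delta / 2) 1.
  have eps_gt0 : 0 < eps by rewrite lt_min ltr01 andbT divr_gt0.
  have eps_le1 : eps <= 1 by rewrite ge_min lexx orbT.
  have eps_lt_delta : eps < delta by rewrite gt_min; apply/orP; left; lra.
  have t_gt0 : 0 < eps / 2 by rewrite divr_gt0.
  have t_lt_eps : eps / 2 < eps by lra.
  exists 1%N, 2%N, unit_capacity, (complements_value eps).
  split; first exact: complements_value_ge0 t_gt0 t_lt_eps.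
  split; first exact: complements_value_empty.
  exists [:: first_prices (eps / 2)], (extra_prices eps), (truthful_response eps).
  split; [|split].
  - move=> p; rewrite !inE => /orP[] /eqP ->; split.
    + exact: extra_prices_ge0 t_gt0 t_lt_eps.
    + exact: demand_extra_prices t_gt0 t_lt_eps.
    + exact: first_prices_ge0 t_gt0.
    + exact: demand_first_prices t_gt0 t_lt_eps eps_le1.
  - move=> a; exact: efficiency_first t_gt0 eps_le1 a.
  - by move=> a /(efficiency_first_extra t_gt0 t_lt_eps eps_le1) ->.
move=> R n m c v v_ge0 v_empty Q Q' sub_QQ' a' /(vq_WDP_monotone v_ge0 v_empty sub_QQ').
by case=> a WDP_a le_welfare; exists a; split; last exact: ler_efficiency.
Qed.
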